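(* Fix the hypervector dimension $d>0$ and the corresponding round number $J_d\ge1$. For each user $i\in\{1,\dots,U\}$ define $$t_i^{\max}(d)=\frac{T-\frac{Z_id+(J_d-1)G_id}{f_i^{\max}}}{J_d},$$ and for $t>0$ let $b_i^{\min}(t)=\inf\{b>0:\ t\,b\log_2(1+\frac{p_i^{\max}g_i}{N_0b})\ge N_id\}\in(0,\infty]$. Then the set of $(\boldsymbol t,\boldsymbol b,\boldsymbol p,\boldsymbol f)$ satisfying, for all $i$, $$\frac{Z_id+(J_d-1)G_id}{f_i}+J_dt_i\le T,\quad t_ib_i\log_2\!\Big(1+\frac{p_ig_i}{N_0b_i}\Big)\ge N_id,\quad\sum_{j=1}^Ub_j\le B,\quad 0\le p_i\le p_i^{\max},\quad 0<f_i\le f_i^{\max},\quad b_i>0,\quad t_i\ge0$$ is nonempty if and only if (1) $t_i^{\max}(d)>0$ for all $i$, and (2) $\sum_{i=1}^U b_i^{\min}\big(t_i^{\max}(d)\big)\le B$.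
   Context: $U$ users; $t_i,b_i,p_i,f_i$ are user $i$'s per-round transmission time, bandwidth, transmit power and CPU frequency, with limits $p_i^{\max}>0$, $f_i^{\max}>0$; $g_i>0$ the channel power gain, $N_0>0$ the noise power spectral density, $N_i>0$ the number of classes (payload $N_id$ bits), $B>0$ the total bandwidth, $T>0$ the total time budget; $Z_i=D_iC_i^{(\mathrm{init})}>0$ and $G_i=D_iC_i^{(\mathrm{ret})}\ge0$ the per-dimension CPU cycles for the first round and for each retraining round. *)

From HB Require Import structures.
From mathcomp Require Import all_boot all_order all_algebra.
From mathcomp Require Import all_classical all_reals all_analysis.
Set Implicit Arguments. Unset Strict Implicit. Unset Printing Implicit Defensive.
Import Order.TTheory GRing.Theory Num.Theory.
Local Open Scope classical_set_scope.
Local Open Scope ring_scope.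

Section Defs.
Variable R : realType.

Definition log2 (x : R) : R := ln x / ln 2.

Definition bits (t b p g N0 : R) : R := t * b * log2 (1 + p * g / (N0 * b)).

Definition cycles (Z G : R) (d J : nat) : R := Z * d%:R + (J%:R - 1) * G * d%:R.

Definition tmax (T Z G fmax : R) (d J : nat) : R :=
  (T - cycles Z G d J / fmax) / J%:R.

Definition bmin (pmax g N0 : R) (Nd : R) (t : R) : \bar R :=
  ereal_inf [set b%:E | b in [set b : R | 0 < b /\ Nd <= bits t b pmax g N0]].

Definition feasible (U d J : nat) (T B N0 : R) (g pmax fmax Z G : 'I_U -> R)
    (N : 'I_U -> nat) (t b p f : 'I_U -> R) : Prop :=
  (forall i, cycles (Z i) (G i) d J / f i + J%:R * t i <= T) /\
  (forall i, (N i * d)%:R <= bits (t i) (b i) (p i) (g i) N0) /\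
  (\sum_(j < U) b j <= B) /\
  (forall i, 0 <= p i <= pmax i) /\
  (forall i, 0 < f i <= fmax i) /\
  (forall i, 0 < b i) /\
  (forall i, 0 <= t i).
End Defs.

(* Necessity: f_i <= f_i^max forces t_i <= t_i^max(d); a transmitted payload forces t_i > 0;
   and since the rate is monotone in time and power, b_i already meets the requirement at
   (t_i^max(d), p_i^max), so b_i^min(t_i^max(d)) <= b_i.
   Sufficiency: run every user at full CPU speed and power, with t_i = t_i^max(d) and
   b_i = b_i^min(t_i^max(d)).  The only point is that this infimum is attained.  By
   ln(1 + y) <= 2 sqrt y the rate is at most a multiple of sqrt b, so admissible bandwidths
   are bounded away from 0; and for b >= m the SNR term is at most its value at m, so if m
   fell short of the payload, so would every bandwidth close to m, and m would not be the
   infimum. *)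
From HB Require Import structures.
From mathcomp Require Import all_boot all_order all_algebra.
From mathcomp Require Import all_classical all_reals all_analysis.
From mathcomp Require Import ring lra.
Import Order.TTheory GRing.Theory Num.Theory.
Set Implicit Arguments. Unset Strict Implicit.
Local Open Scope classical_set_scope.
Local Open Scope ring_scope.

Section Rate.
Variable R : realType.
Implicit Types t b m p g Nd y : R.

Lemma ln2_gt0 : 0 < ln (2 : R).
Proof. by apply: ln_gt0; rewrite ltr1n. Qed.

Lemma ln1Dx_le_2sqrt y : 0 <= y -> ln (1 + y) <= 2 * Num.sqrt y.
Proof.
move=> y0; set s := Num.sqrt y.
have s0 : 0 <= s by apply: sqrtr_ge0.
have sy : s ^+ 2 = y by apply: sqr_sqrtr.
have le_sq : 1 + y <= (1 + s) * (1 + s) by rewrite -sy expr2; nra.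
apply: (le_trans (y := ln ((1 + s) * (1 + s)))).
  by rewrite ler_ln // posrE; nra.
rewrite lnM ?posrE; try nra.
by rewrite mulr2n mulrDl mul1r; apply: lerD; apply: le_ln1Dx; lra.
Qed.

Lemma bits_le_sqrt t b p g (N0 : R) : 0 <= t -> 0 < b -> 0 <= p -> 0 <= g -> 0 < N0 ->
  bits t b p g N0 <= t * (2 * Num.sqrt (b * (p * g / N0))) / ln 2.
Proof.
move=> t0 b0 p0 g0 N00; rewrite /bits /log2.
set y := p * g / (N0 * b).
have y0 : 0 <= y by rewrite /y divr_ge0 // ?mulr_ge0 // ltW.
have -> : b * (p * g / N0) = (b * b) * y.
  by rewrite /y; field; rewrite !gt_eqF.
rewrite sqrtrM ?mulr_ge0 ?(ltW b0) // -expr2 sqrtr_sqr gtr0_norm //.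
have -> : t * b * (ln (1 + y) / ln 2) = t * (b * ln (1 + y)) / ln 2 by ring.
rewrite ler_pM2r ?invr_gt0 ?ln2_gt0 // ler_wpM2l // mulrCA.
by rewrite ler_wpM2l ?ln1Dx_le_2sqrt // ltW.
Qed.

Lemma bits_bandwidth_lbound t b p g (N0 : R) Nd :
  0 < t -> 0 < b -> 0 < p -> 0 < g -> 0 < N0 -> 0 < Nd -> Nd <= bits t b p g N0 ->
  (Nd * ln 2 / (2 * t)) ^+ 2 / (p * g / N0) <= b.
Proof.
move=> t0 b0 p0 g0 N00 Nd0 hNd.
have := le_trans hNd (bits_le_sqrt (ltW t0) b0 (ltW p0) (ltW g0) N00).
set c := p * g / N0; have c0 : 0 < c by rewrite /c divr_gt0 // mulr_gt0.
set s := Num.sqrt (b * c) => le_Nd_s.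
have l2 := ln2_gt0.
have le_s : Nd * ln 2 / (2 * t) <= s.
  rewrite ler_pdivrMr ?mulr_gt0 // -ler_pdivlMr //.
  by have -> : s * (2 * t) = t * (2 * s) by ring.
have s2 : s ^+ 2 = b * c by rewrite sqr_sqrtr // mulr_ge0 // ltW.
rewrite ler_pdivrMr // -s2 lerXn2r // ?nnegrE ?sqrtr_ge0 //.
by rewrite divr_ge0 ?mulr_ge0 // ltW.
Qed.

Lemma ler_bits t t' b p p' g (N0 : R) : 0 <= t -> t <= t' -> 0 < b ->
  0 <= p -> p <= p' -> 0 <= g -> 0 < N0 ->
  bits t b p g N0 <= bits t' b p' g N0.
Proof.
move=> t0 tt' b0 p0 pp' g0 N00; rewrite /bits /log2.
have Nb0 : 0 < N0 * b by rewrite mulr_gt0.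
have y0 : 0 <= p * g / (N0 * b) by rewrite divr_ge0 ?mulr_ge0 // ltW.
have yy' : p * g / (N0 * b) <= p' * g / (N0 * b).
  by rewrite ler_pM2r ?invr_gt0 // ler_wpM2r.
apply: ler_pM; first by rewrite mulr_ge0 // ltW.
- by apply: divr_ge0; [apply: ln_ge0; lra | exact: ltW ln2_gt0].
- by rewrite ler_wpM2r // ltW.
- by rewrite ler_pM2r ?invr_gt0 ?ln2_gt0 // ler_ln ?posrE; lra.
Qed.

Lemma bits_le_snr_at t m b p g (N0 : R) : 0 <= t -> 0 < m -> m <= b ->
  0 <= p -> 0 <= g -> 0 < N0 ->
  bits t b p g N0 <= t * b * log2 (1 + p * g / (N0 * m)).
Proof.
move=> t0 m0 mb p0 g0 N00; have b0 := lt_le_trans m0 mb.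
rewrite /bits /log2 ler_wpM2l ?mulr_ge0 ?(ltW b0) //.
rewrite ler_pM2r ?invr_gt0 ?ln2_gt0 // ler_ln ?posrE.
- by rewrite lerD2l ler_wpM2l ?mulr_ge0 // lef_pV2 ?posrE ?mulr_gt0 // ler_pM2l.
- by rewrite ltr_wpDr // divr_ge0 ?mulr_ge0 // ltW // mulr_gt0.
- by rewrite ltr_wpDr // divr_ge0 ?mulr_ge0 // ltW // mulr_gt0.
Qed.

Lemma bmin_le t b p g (N0 : R) Nd : 0 < b -> Nd <= bits t b p g N0 ->
  (bmin p g N0 Nd t <= b%:E)%E.
Proof. by move=> b0 hb; apply: ereal_inf_lbound; exists b. Qed.

Lemma bmin_ge0 t p g (N0 : R) Nd : (0 <= bmin p g N0 Nd t)%E.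
Proof. by apply/ereal_infP => _ [b [b0 _] <-]; rewrite lee_fin ltW. Qed.

Lemma bmin_attained t p g (N0 : R) Nd : 0 < t -> 0 < p -> 0 < g -> 0 < N0 -> 0 < Nd ->
  bmin p g N0 Nd t \is a fin_num ->
  0 < fine (bmin p g N0 Nd t) /\ Nd <= bits t (fine (bmin p g N0 Nd t)) p g N0.
Proof.
move=> t0 p0 g0 N00 Nd0 bmin_fin.
set m := fine (bmin p g N0 Nd t).
have bminE : bmin p g N0 Nd t = m%:E by rewrite /m fineK.
have m_lb b : 0 < b -> Nd <= bits t b p g N0 -> m <= b.
  by move=> b0 hb; rewrite -lee_fin -bminE bmin_le.
have m0 : 0 < m.
  apply: lt_le_trans (_ : (Nd * ln 2 / (2 * t)) ^+ 2 / (p * g / N0) <= m).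
    by rewrite divr_gt0 ?exprn_gt0 ?divr_gt0 ?mulr_gt0 ?ln2_gt0.
  rewrite -lee_fin -bminE; apply/ereal_infP => _ [b [b0 hb] <-].
  by rewrite lee_fin bits_bandwidth_lbound.
split => //; rewrite leNgt; apply/negP => short_m.
set rate := t * log2 (1 + p * g / (N0 * m)).
have rate0 : 0 < rate.
  by rewrite mulr_gt0 // divr_gt0 ?ln2_gt0 // ln_gt0 // ltrDl !divr_gt0 ?mulr_gt0.
have gap0 : 0 < Nd / rate - m by rewrite subr_gt0 ltr_pdivlMr // mulrCA mulrA.
have [_ [b [b0 hb] <-]] := lb_ereal_inf_adherent gap0 bmin_fin.
rewrite -/(bmin _ _ _ _ _) bminE -EFinD addrC subrK lte_fin ltr_pdivlMr // => b_lt.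
have := le_trans hb (bits_le_snr_at (ltW t0) m0 (m_lb b b0 hb) (ltW p0) (ltW g0) N00).
by rewrite mulrAC mulrC leNgt b_lt.
Qed.

End Rate.

Lemma tmax_ge (R : realType) (T Z G f fmax t : R) (d J : nat) : (0 < J)%N -> 0 < f <= fmax ->
  0 <= cycles Z G d J -> cycles Z G d J / f + J%:R * t <= T -> t <= tmax T Z G fmax d J.
Proof.
move=> J0 /andP[f0 ffmax] cyc0 budget; rewrite /tmax ler_pdivlMr ?ltr0n //.
have : cycles Z G d J / fmax <= cycles Z G d J / f.
  by rewrite ler_wpM2l // lef_pV2 ?posrE // (lt_le_trans f0).
lra.
Qed.

Section Feasibility.
Variables (R : realType) (U d J : nat) (T B N0 : R).
Variables (g pmax fmax Z G : 'I_U -> R) (N : 'I_U -> nat).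
Hypotheses (hd : (0 < d)%N) (hJ : (1 <= J)%N) (hN0 : 0 < N0).
Hypotheses (hg : forall i, 0 < g i) (hpmax : forall i, 0 < pmax i).
Hypotheses (hfmax : forall i, 0 < fmax i) (hZ : forall i, 0 < Z i).
Hypotheses (hG : forall i, 0 <= G i) (hN : forall i, (0 < N i)%N).

Local Notation tm i := (tmax T (Z i) (G i) (fmax i) d J).
Local Notation Nd i := ((N i * d)%:R : R).
Local Notation bm i := (bmin (pmax i) (g i) N0 (Nd i) (tm i)).

Let Nd_gt0 i : 0 < Nd i. Proof. by rewrite ltr0n muln_gt0 hN. Qed.

Lemma feasible_necessary :
  (exists t b p f : 'I_U -> R, feasible d J T B N0 g pmax fmax Z G N t b p f) ->
  (forall i, 0 < tm i) /\ (\sum_(i < U) bm i <= B%:E)%E.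
Proof.
move=> [t [b [p [f [time [payload [band [power [cpu [b_gt0 t_ge0]]]]]]]]]].
have cycles_ge0 i : 0 <= cycles (Z i) (G i) d J.
  by rewrite /cycles addr_ge0 ?mulr_ge0 ?subr_ge0 ?ler1n // ltW.
have t_le i : t i <= tm i by apply: tmax_ge.
have t_gt0 i : 0 < t i.
  rewrite lt_def t_ge0 andbT; apply: contraTneq (payload i) => ->.
  by rewrite -ltNge /bits !mul0r.
split=> [i|]; first exact: lt_le_trans (t_gt0 i) (t_le i).
apply: le_trans (_ : \sum_(i < U) (b i)%:E <= B%:E)%E; last by rewrite sumEFin lee_fin.
apply: lee_sum => i _; apply: bmin_le => //; apply: le_trans (payload i) _.
have /andP[p_ge0 p_le] := power i.
exact: ler_bits (t_ge0 i) (t_le i) (b_gt0 i) p_ge0 p_le (ltW (hg i)) hN0.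
Qed.

Lemma feasible_sufficient :
  (forall i, 0 < tm i) -> (\sum_(i < U) bm i <= B%:E)%E ->
  exists t b p f : 'I_U -> R, feasible d J T B N0 g pmax fmax Z G N t b p f.
Proof.
move=> tm_gt0 band.
have bm_fin i : bm i \is a fin_num.
  have sum_fin : \sum_(i < U) bm i \is a fin_num.
    rewrite ge0_fin_numE; first exact: le_lt_trans band (ltry _).
    by apply: sume_ge0 => j _; exact: bmin_ge0.
  by move/sum_fin_numP : sum_fin; apply.
have bm_ok i := bmin_attained (tm_gt0 i) (hpmax i) (hg i) hN0 (Nd_gt0 i) (bm_fin i).
exists (fun i => tm i), (fun i => fine (bm i)), pmax, fmax.
split; [|split; [|split; [|split; [|split; [|split]]]]] => [i|i||i|i|i|i].
- rewrite /tmax mulrCA mulfV ?mulr1 ?pnatr_eq0 -?lt0n //.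
  by rewrite addrC subrK.
- exact: (bm_ok i).2.
- by rewrite -lee_fin -sumEFin (eq_bigr _ (fun i _ => fineK (bm_fin i))).
- by rewrite lexx ltW.
- by rewrite lexx hfmax.
- exact: (bm_ok i).1.
- exact: ltW.
Qed.

End Feasibility.

Theorem proposition2 (R : realType) (U d J : nat) (T B N0 : R)
    (g pmax fmax Z G : 'I_U -> R) (N : 'I_U -> nat)
    (hd : (0 < d)%N) (hJ : (1 <= J)%N) (hT : 0 < T) (hB : 0 < B) (hN0 : 0 < N0)
    (hg : forall i, 0 < g i) (hpmax : forall i, 0 < pmax i)
    (hfmax : forall i, 0 < fmax i) (hZ : forall i, 0 < Z i)
    (hG : forall i, 0 <= G i) (hN : forall i, (0 < N i)%N) :
  (exists t b p f : 'I_U -> R, feasible d J T B N0 g pmax fmax Z G N t b p f) <->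
  ((forall i, 0 < tmax T (Z i) (G i) (fmax i) d J) /\
   (\sum_(i < U) bmin (pmax i) (g i) N0 (N i * d)%:R (tmax T (Z i) (G i) (fmax i) d J)
      <= B%:E)%E).
Proof.
split; first exact: feasible_necessary.
by case; apply: feasible_sufficient.
Qed.
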